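(* Let $(A,B)$ be a Katsura pair with $B\in M_N(\{0,1\})$ such that the KEP-action $(G_B,E_A)$ is regular. Suppose $v=(v_k)\in E_C^{-\infty}$ satisfies $B_{v_{k-1},v_k}=1$ for all $k<0$. Then for $\mu,\nu\in X_v$, $\mu\sim_{ae}\nu$ if and only if $C_v(\iota_v(\mu))=C_v(\iota_v(\nu))$.
   Context: Katsura pair: $N\in\mathbb{N}$, $A\in M_N(\mathbb{N})$ (nonnegative integers), $B\in M_N(\mathbb{Z})$ with $A_{ij}=0\Rightarrow B_{ij}=0$. Graph $E_A$: vertices $\{1,\dots,N\}$, edges $e_{i,j,m}$ ($0\le m<A_{ij}$), $r=i$, $s=j$; $E_A^{-\infty}$ left-infinite paths $\cdots\mu_{-2}\mu_{-1}$ with $s(\mu_k)=r(\mu_{k+1})$. The group bundle $\mathbb{Z}\times E_A^0$ (elements $a_i^k$) acts by $a_i^k\cdot e_{i,j,m}=e_{i,j,\hat m}$, $a_i^k|_{e_{i,j,m}}=a_j^{\hat k}$ where $kB_{ij}+m=\hat kA_{ij}+\hat m$, $0\le\hat m<A_{ij}$, extended recursively to finite paths; $G_B$ is the faithful quotient and $(G_B,E_A)$ the KEP-action. Regular: for every $g\in G_B$ there is $K$ such that $g\cdot\mu=\mu$, $|\mu|\ge K$ imply $g|_\mu$ is the unit at $s(\mu)$. $\mu\sim_{ae}\nu$ iff there are a finite $F\subseteq G_B$ and $(g_n)_{n<0}\subseteq F$ with $d(g_n)=r(\mu_n)$ and $g_n\cdot\mu_n\cdots\mu_{-1}=\nu_n\cdots\nu_{-1}$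 for all $n<0$. $C$ is the connectivity matrix of $E_A$ ($C_{ij}=1$ if $A_{ij}>0$, else $0$) with graph $E_C$; an element $v\in E_C^{-\infty}$ is encoded by its vertex sequence $(v_k)_{k\le-1}$, $v_k$ the source of the $k$-th edge and $v_{k-1}$ its range. $A_{v[k,-1]}=\prod_{j=k}^{-1}A_{v_{j-1},v_j}$. $X_v=\{\mu\in E_A^{-\infty}: s(\mu_k)=v_k\ \forall k<0\}$, $\mathcal{A}_v=\prod_{k<0}\{0,\dots,A_{v_{k-1},v_k}-1\}$, and $\iota_v:X_v\to\mathcal{A}_v$ sends $\cdots e_{v_{-3},v_{-2},i_{-2}}e_{v_{-2},v_{-1},i_{-1}}$ to $(\dots,i_{-2},i_{-1})$. $C_v:\mathcal{A}_v\to\mathbb{R}/\mathbb{Z}$ is $C_v(\dots,i_{-2},i_{-1})=\sum_{k=-1}^{-\infty}\frac{i_k}{A_{v[k,-1]}}\bmod 1$. *)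

From Stdlib Require Import Reals ZArith Arith List.
From Coquelicot Require Import Coquelicot.
Import ListNotations.
Local Open Scope nat_scope.

(* Edges e_{i,j,m} of E_A: range er = i, source es = j, label em = m. *)
Record edge := mkEdge { er : nat; es : nat; em : nat }.

Section KEP.
Variables (N : nat) (A : nat -> nat -> nat) (B : nat -> nat -> Z).

Definition katsura_pair : Prop :=
  forall i j, i < N -> j < N -> A i j = 0 -> B i j = 0%Z.

Definition valid_edge (e : edge) : Prop :=
  er e < N /\ es e < N /\ em e < A (er e) (es e).

(* Finite path mu_1 ... mu_n (list head = mu_1) with range i:
   r(mu_1) = i and s(mu_k) = r(mu_{k+1}). *)
Fixpoint valid_path (i : nat) (p : list edge) : Prop :=
  match p with
  | [] => True
  | e :: q => valid_edge e /\ er e = i /\ valid_path (es e) q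
  end.

Fixpoint path_src (i : nat) (p : list edge) : nat :=
  match p with
  | [] => i
  | e :: q => path_src (es e) q
  end.

(* a_{r(e)}^k . e and a_{r(e)}^k |_e : k B_ij + m = khat A_ij + mhat, 0 <= mhat < A_ij *)
Definition act_edge (k : Z) (e : edge) : edge * Z :=
  let t := (k * B (er e) (es e) + Z.of_nat (em e))%Z in
  let a := Z.of_nat (A (er e) (es e)) in
  (mkEdge (er e) (es e) (Z.to_nat (t mod a)), (t / a)%Z).

(* recursive extension to finite paths: returns (a^k . p, integer of a^k|_p);
   the restriction a^k|_p lives at the vertex path_src i p *)
Fixpoint act_path (k : Z) (p : list edge) : list edge * Z :=
  match p with
  | [] => ([], k)
  | e :: q =>
      let (e', k') := act_edge k e in
      let (q', k'') := act_path k' q in (e' :: q', k'')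
  end.

(* a_i^k and a_i^k' define the same element of the faithful quotient G_B *)
Definition gequiv (i : nat) (k k' : Z) : Prop :=
  forall p, valid_path i p -> fst (act_path k p) = fst (act_path k' p).

(* Regularity of (G_B, E_A), stated on representatives a_i^k of elements of G_B;
   the unit at vertex j is the class of a_j^0. *)
Definition regular : Prop :=
  forall (i : nat) (k : Z), i < N ->
    exists K : nat, forall p, valid_path i p -> K <= length p ->
      fst (act_path k p) = p ->
      gequiv (path_src i p) (snd (act_path k p)) 0%Z.

(* Left-infinite paths: mu n stands for mu_{-(n+1)};
   s(mu_{-(n+2)}) = r(mu_{-(n+1)}). *)
Definition linf_path (mu : nat -> edge) : Prop :=
  forall n, valid_edge (mu n) /\ es (mu (S n)) = er (mu n).

Fixpoint trunc (mu : nat -> edge) (n : nat) : list edge :=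
  match n with
  | O => [mu O]
  | S m => mu (S m) :: trunc mu m
  end.

(* asymptotic equivalence ~ae.  An element g_n of G_B is given by a
   representative (vertex, integer) = a_vertex^integer; the finite set F of
   G_B is given by a finite list of representatives. *)
Definition ae_equiv (mu nu : nat -> edge) : Prop :=
  exists (F : list (nat * Z)) (g : nat -> nat * Z),
    forall n, In (g n) F /\ fst (g n) = er (mu n) /\
              fst (act_path (snd (g n)) (trunc mu n)) = trunc nu n.

(* v in E_C^{-oo}, vertex sequence v n = v_{-(n+1)}; edge v_{k-1} -> v_k exists. *)
Definition in_EC (v : nat -> nat) : Prop :=
  forall n, v n < N /\ 0 < A (v (S n)) (v n).

Definition in_X (v : nat -> nat) (mu : nat -> edge) : Prop :=
  linf_path mu /\ forall n, es (mu n) = v n.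

Definition iota_v (mu : nat -> edge) : nat -> nat := fun n => em (mu n).

Fixpoint Aprod (v : nat -> nat) (n : nat) : nat :=
  match n with
  | O => A (v 1) (v 0)
  | S m => Aprod v m * A (v (S (S m))) (v (S m))
  end.

(* real representative of C_v(x) = sum_k i_k / A_{v[k,-1]}  (value in R/Z) *)
Definition C_v_real (v : nat -> nat) (x : nat -> nat) : R :=
  Series (fun n => (INR (x n) / INR (Aprod v n))%R).

End KEP.

Definition eq_mod1 (x y : R) : Prop := exists z : Z, (x - y)%R = IZR z.

From Stdlib Require Import Reals ZArith Arith List Lia Lra Classical FunctionalExtensionality.
From Coquelicot Require Import Coquelicot.
Import ListNotations.
Open Scope nat_scope.

(* Along [v] every [B] entry is 1, so the generator [a_i^k] acts on the finite path
   [mu_n ... mu_{-1}] as an odometer: reading the labels as a mixed-radix integer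
   [W_n(mu) = radix_value (iota_v mu) n] (least significant digit at [mu_n], moduli the
   entries of [A] along [v]), it adds [k] modulo [P_n = Aprod v n].  Moreover [C_v(mu) P_n]
   lies within 1 of [W_n(mu)].  Hence [mu ~ae nu] means that [W_n(nu) - W_n(mu)] is
   congruent mod [P_n] to a uniformly bounded integer for all [n].  If [P_n] is unbounded,
   this says exactly that [C_v(mu) - C_v(nu)] is an integer, the bounded shifts being -1, 0
   and 1.  If [P_n] stays bounded, regularity forces [A = 1] along all of [v], and [X_v] is
   a single point. *)

Lemma cons_eq_iff {T : Type} (x y : T) (p q : list T) :
  x :: p = y :: q <-> x = y /\ p = q.
Proof. split; [intros H; injection H; auto | intros [-> ->]; reflexivity]. Qed.

Lemma exists_uniform_bound (n : nat) (Q : nat -> nat -> Prop) :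
  (forall i K K', K <= K' -> Q i K -> Q i K') ->
  (forall i, i < n -> exists K, Q i K) -> exists K, forall i, i < n -> Q i K.
Proof.
  intros Hmono H. induction n as [|n IH]; [exists 0; lia|].
  destruct IH as [K1 HK1]; [intros i Hi; apply H; lia|].
  destruct (H n ltac:(lia)) as [K2 HK2].
  exists (Nat.max K1 K2). intros i Hi.
  destruct (Nat.eq_dec i n) as [->|Hne].
  - apply (Hmono _ K2); [lia|exact HK2].
  - apply (Hmono _ K1); [lia|]. apply HK1. lia.
Qed.

Lemma list_abs_snd_bound (F : list (nat * Z)) :
  exists M, forall x, In x F -> (Z.abs (snd x) <= M)%Z.
Proof.
  induction F as [|a F [M HM]]; [exists 0%Z; intros x []|].
  exists (Z.max M (Z.abs (snd a))). intros x [->|Hx]; [lia|]. specialize (HM x Hx). lia.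
Qed.

Lemma mod_eq_iff_divide (a d d' k : Z) : (0 <= d' < a)%Z ->
  ((k + d) mod a = d' <-> (a | d' - (d + k)))%Z.
Proof.
  intros hd'. split.
  - intros H. apply Z.divide_opp_r. replace (- (d' - (d + k)))%Z with (k + d - d')%Z by lia.
    apply Znumtheory.Zmod_divide_minus; lia.
  - intros H. apply Znumtheory.Zdivide_mod_minus; [lia|].
    apply Z.divide_opp_r in H. replace (k + d - d')%Z with (- (d' - (d + k)))%Z by lia. exact H.
Qed.

Lemma carry_step (a d d' k Wm Wn P : Z) : (0 < a)%Z -> (0 <= d' < a)%Z ->
  ((k + d) mod a = d' /\ (P | Wn - (Wm + (k + d) / a)) <->
   (P * a | d' + a * Wn - (d + a * Wm + k)))%Z.
Proof.
  intros ha hd'.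
  pose proof (Z.div_mod (k + d) a ltac:(lia)) as Ekd.
  set (q := ((k + d) / a)%Z) in *.
  split.
  - intros [Hr HP].
    replace (d' + a * Wn - (d + a * Wm + k))%Z with ((Wn - (Wm + q)) * a)%Z by lia.
    now apply Z.mul_divide_mono_r.
  - intros HPa.
    assert (Hr : ((k + d) mod a = d')%Z).
    { apply mod_eq_iff_divide; [exact hd'|].
      apply (Z.divide_add_cancel_r _ (a * (Wn - Wm))); [apply Z.divide_factor_l|].
      replace (a * (Wn - Wm) + (d' - (d + k)))%Z with (d' + a * Wn - (d + a * Wm + k))%Z by ring.
      exact (Z.divide_trans _ _ _ (Z.divide_factor_r a P) HPa). }
    split; [exact Hr|].
    apply (Z.mul_divide_cancel_r _ _ a); [lia|].
    replace ((Wn - (Wm + q)) * a)%Z with (d' + a * Wn - (d + a * Wm + k))%Z by lia.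
    exact HPa.
Qed.

Lemma Lim_seq_between (u w : nat -> R) :
  (forall n, u n <= u (S n))%R -> Un_decreasing w -> (forall n, u n <= w n)%R ->
  forall n, (u n <= real (Lim_seq u) <= w n)%R.
Proof.
  intros Hu Hw Huw.
  assert (Hle : forall m n, (u m <= w n)%R).
  { intros m n. apply (Rle_trans _ (u (Nat.max m n))).
    - apply tech9; [exact Hu|lia].
    - apply (Rle_trans _ _ _ (Huw _)), decreasing_prop; [exact Hw|lia]. }
  destruct (ex_finite_lim_seq_incr u (w 0) Hu (fun m => Hle m 0)) as [l Hl].
  rewrite (is_lim_seq_unique _ _ Hl). cbn. intros n. split.
  - exact (is_lim_seq_incr_compare u l Hl Hu n).
  - exact (is_lim_seq_le u (fun _ => w n) l (w n) (fun m => Hle m n) Hl (is_lim_seq_const _)).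
Qed.

Lemma eq_IZR_of_scaled_gap (D K : R) (P : nat -> nat) :
  (forall b, exists n, b < P n) ->
  (forall n, exists c : Z, Rabs (D - IZR c) * INR (P n) <= K)%R ->
  exists c : Z, D = IZR c.
Proof.
  intros Hunb Hgap.
  assert (HPR : forall r : R, exists n, (r < INR (P n))%R).
  { intros r. destruct (INR_unbounded r) as [m Hm]. destruct (Hunb m) as [n Hn].
    exists n. apply lt_INR in Hn. lra. }
  assert (Hclose : forall n c, (2 * K < INR (P n))%R ->
            (Rabs (D - IZR c) * INR (P n) <= K)%R -> (Rabs (D - IZR c) < / 2)%R).
  { intros n c HP Hc. apply Rnot_le_lt. intros Hge.
    pose proof (Rmult_le_compat_r (INR (P n)) _ _ (pos_INR _) Hge). lra. }
  destruct (HPR (2 * K)%R) as [n0 Hn0]. destruct (Hgap n0) as [c0 Hc0]. exists c0.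
  assert (Hc0all : forall n, (2 * K < INR (P n))%R -> (Rabs (D - IZR c0) * INR (P n) <= K)%R).
  { intros n Hn. destruct (Hgap n) as [c Hc].
    assert (c = c0) as <-; [|exact Hc].
    pose proof (Rabs_def2 _ _ (Hclose _ _ Hn Hc)).
    pose proof (Rabs_def2 _ _ (Hclose _ _ Hn0 Hc0)).
    assert (Hlt : (IZR (c - c0) < 1 /\ -1 < IZR (c - c0))%R) by (rewrite minus_IZR; lra).
    destruct Hlt as [H1 H2]. apply lt_IZR in H1, H2. lia. }
  destruct (Req_dec D (IZR c0)) as [|Hne]; [assumption|exfalso].
  assert (Hd : (0 < Rabs (D - IZR c0))%R) by (apply Rabs_pos_lt; lra).
  set (d := Rabs (D - IZR c0)) in *.
  destruct (HPR (Rmax (2 * K) (K / d))) as [n Hn].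
  pose proof (Rmax_l (2 * K) (K / d)). pose proof (Rmax_r (2 * K) (K / d)).
  specialize (Hc0all n ltac:(lra)).
  assert (HKd : (K / d < INR (P n))%R) by lra.
  apply (Rmult_lt_compat_l d) in HKd; [|exact Hd].
  replace (d * (K / d))%R with K in HKd by (field; lra). lra.
Qed.

Lemma act_path_cons A B k e q : act_path A B k (e :: q) =
  (fst (act_edge A B k e) :: fst (act_path A B (snd (act_edge A B k e)) q),
   snd (act_path A B (snd (act_edge A B k e)) q)).
Proof.
  cbn [act_path]. destruct (act_edge A B k e) as [e' k'].
  cbn [fst snd]. destruct (act_path A B k' q). reflexivity.
Qed.

Lemma trunc_length mu n : length (trunc mu n) = S n.
Proof. induction n as [|n IH]; cbn [trunc length]; congruence. Qed.

Definition over (A : nat -> nat -> nat) (v : nat -> nat) (mu : nat -> edge) : Prop :=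
  forall j, er (mu j) = v (S j) /\ es (mu j) = v j /\ em (mu j) < A (v (S j)) (v j).

(* Digits [x 0, ..., x n] from the most to the least significant. *)
Fixpoint radix_value (A : nat -> nat -> nat) (v : nat -> nat) (x : nat -> nat) (n : nat) : Z :=
  match n with
  | O => Z.of_nat (x 0)
  | S m => (Z.of_nat (x (S m)) + Z.of_nat (A (v (S (S m))) (v (S m))) * radix_value A v x m)%Z
  end.

Definition zero_path (v : nat -> nat) : nat -> edge := fun j => mkEdge (v (S j)) (v j) 0.

Lemma in_X_over N A v mu : in_X N A v mu -> over A v mu.
Proof.
  intros [Hl Hs] j. destruct (Hl j) as [[_ [_ Hm]] Hr].
  rewrite Hs in Hr. rewrite <- Hr, Hs in *. auto.
Qed.

Lemma Aprod_eq_1 A v T : Aprod A v T = 1 -> forall j, j <= T -> A (v (S j)) (v j) = 1.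
Proof.
  induction T as [|T IH]; intros H j Hj; cbn [Aprod] in H.
  - replace j with 0 by lia. exact H.
  - apply Nat.eq_mul_1 in H as [H1 H2].
    destruct (Nat.eq_dec j (S T)) as [->|]; [exact H2|]. apply IH; [exact H1|lia].
Qed.

Section Radix.

Variables (A : nat -> nat -> nat) (v : nat -> nat).
Hypothesis hpos : forall j, 0 < A (v (S j)) (v j).

Lemma Aprod_pos n : 0 < Aprod A v n.
Proof. induction n as [|n IH]; cbn [Aprod]; [apply hpos|]. specialize (hpos (S n)). nia. Qed.

Lemma Aprod_le n m : n <= m -> Aprod A v n <= Aprod A v m.
Proof.
  induction m as [|m IH]; intros Hnm; [replace n with 0 by lia; lia|].
  destruct (Nat.eq_dec n (S m)) as [->|]; [lia|].
  cbn [Aprod]. specialize (IH ltac:(lia)). specialize (hpos (S m)). nia.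
Qed.

Lemma tail_one_or_Aprod_unbounded :
  (exists T, forall j, T < j -> A (v (S j)) (v j) = 1) \/
  (forall b, exists n, b < Aprod A v n).
Proof.
  destruct (classic (exists T, forall j, T < j -> A (v (S j)) (v j) = 1)) as [H|H];
    [left; exact H|right].
  induction b as [|b [n Hn]]; [exists 0; apply Aprod_pos|].
  apply not_ex_all_not with (n := n) in H. apply not_all_ex_not in H as [j Hj].
  apply imply_to_and in Hj as [Hnj HA].
  destruct j as [|j]; [lia|]. exists (S j). cbn [Aprod].
  pose proof (Aprod_le n j ltac:(lia)). pose proof (hpos (S j)). nia.
Qed.

Lemma partial_sum_radix x n :
  @eq R (sum_n (fun j => INR (x j) / INR (Aprod A v j))%R n)
    (IZR (radix_value A v x n) / INR (Aprod A v n))%R.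
Proof.
  induction n as [|n IH].
  - rewrite sum_O. cbn [radix_value Aprod]. now rewrite <- INR_IZR_INZ.
  - rewrite sum_Sn, IH. change plus with Rplus. cbn [radix_value Aprod].
    rewrite plus_IZR, mult_IZR, <- !INR_IZR_INZ, mult_INR.
    pose proof (lt_0_INR _ (Aprod_pos n)). pose proof (lt_0_INR _ (hpos (S n))).
    field. lra.
Qed.

Lemma radix_upper_decreasing x (hx : forall j, x j < A (v (S j)) (v j)) :
  Un_decreasing (fun n => (IZR (radix_value A v x n) + 1) / INR (Aprod A v n))%R.
Proof.
  intros m. cbn [radix_value Aprod].
  rewrite plus_IZR, mult_IZR, <- !INR_IZR_INZ, mult_INR.
  pose proof (lt_0_INR _ (Aprod_pos m)). pose proof (lt_0_INR _ (hpos (S m))).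
  pose proof (le_INR _ _ (hx (S m))) as Hx. rewrite S_INR in Hx.
  set (a := INR (A (v (S (S m))) (v (S m)))) in *.
  set (P := INR (Aprod A v m)) in *.
  set (W := IZR (radix_value A v x m)).
  assert (E : ((W + 1) / P - (INR (x (S m)) + a * W + 1) / (P * a)
               = (a - INR (x (S m)) - 1) / (P * a))%R) by (field; lra).
  assert (0 <= (a - INR (x (S m)) - 1) / (P * a))%R
    by (apply Rle_mult_inv_pos; [lra|apply Rmult_lt_0_compat; lra]).
  lra.
Qed.

(* [C_v] lies between the increasing partial sums [W_n / P_n] and the decreasing
   [(W_n + 1) / P_n]. *)
Lemma C_v_real_bounds x (hx : forall j, x j < A (v (S j)) (v j)) n :
  (IZR (radix_value A v x n) <= C_v_real A v x * INR (Aprod A v n) <=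
   IZR (radix_value A v x n) + 1)%R.
Proof.
  set (u := sum_n (fun j => INR (x j) / INR (Aprod A v j))%R).
  assert (HP : forall n, (0 < INR (Aprod A v n))%R) by (intros m; apply lt_0_INR, Aprod_pos).
  assert (Hu : forall n, (u n <= u (S n))%R).
  { intros m. unfold u. rewrite sum_Sn. change plus with Rplus.
    pose proof (Rle_mult_inv_pos _ _ (pos_INR (x (S m))) (HP (S m))). lra. }
  assert (Huw : forall n, (u n <= (IZR (radix_value A v x n) + 1) / INR (Aprod A v n))%R).
  { intros m. unfold u. rewrite partial_sum_radix.
    apply Rmult_le_compat_r; [apply Rlt_le, Rinv_0_lt_compat, HP|lra]. }
  pose proof (Lim_seq_between u _ Hu (radix_upper_decreasing x hx) Huw n) as [H1 H2].
  change (real (Lim_seq u)) with (C_v_real A v x) in H1, H2.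
  unfold u in H1. rewrite partial_sum_radix in H1.
  pose proof (HP n). set (P := INR (Aprod A v n)) in *.
  set (W := IZR (radix_value A v x n)) in *.
  split.
  - apply (Rmult_le_compat_r P) in H1; [|lra].
    replace (W / P * P)%R with W in H1 by (field; lra). exact H1.
  - apply (Rmult_le_compat_r P) in H2; [|lra].
    replace ((W + 1) / P * P)%R with (W + 1)%R in H2 by (field; lra). exact H2.
Qed.

End Radix.

Section Odometer.

Variables (A : nat -> nat -> nat) (B : nat -> nat -> Z) (v : nat -> nat).
Hypothesis hpos : forall j, 0 < A (v (S j)) (v j).
Hypothesis hB : forall j, B (v (S j)) (v j) = 1%Z.

Lemma over_zero_path : over A v (zero_path v).
Proof. intros j. unfold zero_path. cbn. auto. Qed.

Lemma act_edge_over mu (hmu : over A v mu) n k :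
  act_edge A B k (mu n) =
  (mkEdge (v (S n)) (v n)
     (Z.to_nat ((k + Z.of_nat (em (mu n))) mod Z.of_nat (A (v (S n)) (v n)))),
   ((k + Z.of_nat (em (mu n))) / Z.of_nat (A (v (S n)) (v n)))%Z).
Proof.
  unfold act_edge. destruct (hmu n) as [-> [-> _]]. rewrite hB, Z.mul_1_r. reflexivity.
Qed.

Lemma mkEdge_eq_over nu (hnu : over A v nu) n r : (0 <= r)%Z ->
  mkEdge (v (S n)) (v n) (Z.to_nat r) = nu n <-> r = Z.of_nat (em (nu n)).
Proof.
  intros hr. destruct (hnu n) as [h1 [h2 _]].
  destruct (nu n) as [a b c]; cbn in *; subst. split.
  - intros H. injection H as H. lia.
  - intros ->. now rewrite Nat2Z.id.
Qed.

Lemma act_trunc_iff mu nu (hmu : over A v mu) (hnu : over A v nu) n k :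
  fst (act_path A B k (trunc mu n)) = trunc nu n <->
  (Z.of_nat (Aprod A v n) |
   radix_value A v (iota_v nu) n - (radix_value A v (iota_v mu) n + k))%Z.
Proof.
  unfold iota_v. revert k. induction n as [|n IH]; intros k; cbn [trunc];
    rewrite act_path_cons, act_edge_over by exact hmu; cbn [fst snd radix_value Aprod].
  - destruct (hnu 0) as [_ [_ hy]]. specialize (hpos 0).
    rewrite cons_eq_iff, mkEdge_eq_over, <- mod_eq_iff_divide
      by first [exact hnu | lia | apply Z.mod_pos_bound; lia].
    cbn. intuition congruence.
  - destruct (hnu (S n)) as [_ [_ hy]]. specialize (hpos (S n)).
    rewrite cons_eq_iff, mkEdge_eq_over, IH, Nat2Z.inj_mul
      by first [exact hnu | apply Z.mod_pos_bound; lia].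
    apply carry_step; lia.
Qed.

Lemma act_trunc_zero_path (hA1 : forall j, A (v (S j)) (v j) = 1) n k :
  act_path A B k (trunc (zero_path v) n) = (trunc (zero_path v) n, k).
Proof.
  assert (Hedge : forall j k, act_edge A B k (zero_path v j) = (zero_path v j, k)).
  { intros j k'. unfold act_edge, zero_path. cbn [er es em].
    rewrite hB, hA1, Z.mul_1_r, Z.add_0_r, Z.mod_1_r, Z.div_1_r. reflexivity. }
  revert k. induction n as [|n IH]; intros k; cbn [trunc];
    rewrite act_path_cons, Hedge; cbn [fst snd]; [reflexivity|]. now rewrite IH.
Qed.

End Odometer.

Lemma valid_trunc_over N A v mu (hvN : forall j, v j < N) (hmu : over A v mu) n :
  valid_path N A (v (S n)) (trunc mu n).
Proof.
  assert (He : forall j, valid_edge N A (mu j)).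
  { intros j. destruct (hmu j) as [h1 [h2 h3]]. unfold valid_edge. rewrite h1, h2. auto. }
  induction n as [|n IH]; cbn.
  - destruct (hmu 0) as [h1 _]. auto.
  - destruct (hmu (S n)) as [h1 [h2 _]]. rewrite h2. auto.
Qed.

Lemma path_src_trunc_over A v mu (hmu : over A v mu) n :
  path_src (v (S n)) (trunc mu n) = v 0.
Proof.
  induction n as [|n IH]; cbn.
  - apply hmu.
  - destruct (hmu (S n)) as [_ [-> _]]. exact IH.
Qed.

Lemma over_all_one_unique A v mu nu (hmu : over A v mu) (hnu : over A v nu)
  (hA1 : forall j, A (v (S j)) (v j) = 1) : mu = nu.
Proof.
  apply functional_extensionality. intros j.
  destruct (hmu j) as [h1 [h2 h3]], (hnu j) as [h1' [h2' h3']].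
  rewrite hA1 in h3, h3'. destruct (mu j), (nu j); cbn in *. f_equal; lia.
Qed.

(* If [A = 1] along [v] beyond [T], then [a^1] fixes every path of zero labels there and
   restricts to [a^1] at its source; regularity makes [a^1] trivial at [v_{-(T+2)}], while
   [a^1] moves the zero path down to [v_{-1}] unless [Aprod v T = 1]. *)
Lemma regular_tail_one_all_one N A B v (hreg : regular N A B)
  (hvN : forall j, v j < N) (hpos : forall j, 0 < A (v (S j)) (v j))
  (hB : forall j, B (v (S j)) (v j) = 1%Z)
  T (hT : forall j, T < j -> A (v (S j)) (v j) = 1) :
  forall j, A (v (S j)) (v j) = 1.
Proof.
  destruct (exists_uniform_bound N (fun i K => forall p, valid_path N A i p -> K <= length p ->
      fst (act_path A B 1 p) = p -> gequiv N A B (path_src i p) (snd (act_path A B 1 p)) 0))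
    as [K HK].
  { intros i K K' HKK' HQ p Hp Hl. apply HQ; [exact Hp|lia]. }
  { intros i Hi. exact (hreg i 1%Z Hi). }
  set (w := fun j => v (S T + j)).
  assert (hwA : forall j, A (w (S j)) (w j) = 1).
  { intros j. unfold w. rewrite Nat.add_succ_r. apply hT. lia. }
  assert (hwB : forall j, B (w (S j)) (w j) = 1%Z).
  { intros j. unfold w. rewrite Nat.add_succ_r. apply hB. }
  assert (hw0 : over A w (zero_path w)) by (apply over_zero_path; intros j; rewrite hwA; lia).
  assert (Hunit : gequiv N A B (v (S T)) 1 0).
  { pose proof (act_trunc_zero_path A B w hwB hwA K 1) as Hact.
    specialize (HK (w (S K)) (hvN _) (trunc (zero_path w) K)
      (valid_trunc_over N A w _ (fun j => hvN _) hw0 K)).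
    rewrite trunc_length, Hact, (path_src_trunc_over A w _ hw0) in HK.
    unfold w in HK. rewrite Nat.add_0_r in HK. exact (HK ltac:(lia) eq_refl). }
  assert (hv0 : over A v (zero_path v)) by (apply over_zero_path; exact hpos).
  pose proof (act_trunc_iff A B v hpos hB _ _ hv0 hv0 T) as Hodo.
  assert (Hfix : fst (act_path A B 1 (trunc (zero_path v) T)) = trunc (zero_path v) T).
  { rewrite (Hunit _ (valid_trunc_over N A v _ hvN hv0 T)).
    apply Hodo. rewrite Z.add_0_r, Z.sub_diag. apply Z.divide_0_r. }
  apply Hodo in Hfix.
  replace (_ - (_ + 1))%Z with (- 1)%Z in Hfix by lia.
  apply Z.divide_opp_r, Z.divide_1_r_nonneg in Hfix; [|lia].
  intros j. destruct (Nat.le_gt_cases j T).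
  - apply (Aprod_eq_1 A v T); [lia|assumption].
  - apply hT. lia.
Qed.

Section Equivalence.

Variables (N : nat) (A : nat -> nat -> nat) (B : nat -> nat -> Z) (v : nat -> nat).
Hypothesis hpos : forall j, 0 < A (v (S j)) (v j).
Hypothesis hB : forall j, B (v (S j)) (v j) = 1%Z.
Variables mu nu : nat -> edge.
Hypothesis hmu : over A v mu.
Hypothesis hnu : over A v nu.

Lemma ae_equiv_scaled_gap : ae_equiv A B mu nu ->
  exists K, forall n, exists c : Z,
    (Rabs (C_v_real A v (iota_v mu) - C_v_real A v (iota_v nu) - IZR c)
       * INR (Aprod A v n) <= K)%R.
Proof.
  intros [F [g Hg]]. destruct (list_abs_snd_bound F) as [M HM].
  exists (IZR M + 1)%R. intros n.
  destruct (Hg n) as [Hin [_ Hact]].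
  apply (act_trunc_iff A B v hpos hB mu nu hmu hnu) in Hact as [c Hc].
  exists (- c)%Z.
  pose proof (HM _ Hin) as Hk. set (k := snd (g n)) in *.
  assert (Hk' : (- IZR M <= IZR k <= IZR M)%R)
    by (rewrite <- opp_IZR; split; apply IZR_le; lia).
  apply (f_equal IZR) in Hc. rewrite minus_IZR, plus_IZR, mult_IZR, <- INR_IZR_INZ in Hc.
  pose proof (C_v_real_bounds A v hpos (iota_v mu) (fun j => proj2 (proj2 (hmu j))) n).
  pose proof (C_v_real_bounds A v hpos (iota_v nu) (fun j => proj2 (proj2 (hnu j))) n).
  rewrite <- (Rabs_pos_eq (INR (Aprod A v n))) by apply pos_INR.
  rewrite <- Rabs_mult. apply Rabs_le. rewrite opp_IZR.
  set (P := INR (Aprod A v n)) in *.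
  set (Cm := C_v_real A v (iota_v mu)) in *. set (Cn := C_v_real A v (iota_v nu)) in *.
  assert (E : ((Cm - Cn - - IZR c) * P = Cm * P - Cn * P + IZR c * P)%R) by ring.
  lra.
Qed.

Hypothesis hvN : forall j, v j < N.

Lemma ae_equiv_of_eq_mod1 :
  eq_mod1 (C_v_real A v (iota_v mu)) (C_v_real A v (iota_v nu)) -> ae_equiv A B mu nu.
Proof.
  intros [z Hz].
  set (k := fun n => (radix_value A v (iota_v nu) n - radix_value A v (iota_v mu) n
                      + z * Z.of_nat (Aprod A v n))%Z).
  exists (list_prod (seq 0 N) [(-1)%Z; 0%Z; 1%Z]), (fun n => (er (mu n), k n)).
  intros n. cbn [fst snd]. split; [|split; [reflexivity|]].
  - apply in_prod_iff. split.
    + apply in_seq. destruct (hmu n) as [-> _]. specialize (hvN (S n)). lia.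
    + assert (Hk : (-1 <= k n <= 1)%Z).
      { pose proof (C_v_real_bounds A v hpos (iota_v mu) (fun j => proj2 (proj2 (hmu j))) n).
        pose proof (C_v_real_bounds A v hpos (iota_v nu) (fun j => proj2 (proj2 (hnu j))) n).
        assert (Ek : (IZR (k n) = IZR (radix_value A v (iota_v nu) n)
                       - IZR (radix_value A v (iota_v mu) n)
                       + C_v_real A v (iota_v mu) * INR (Aprod A v n)
                       - C_v_real A v (iota_v nu) * INR (Aprod A v n))%R).
        { unfold k. rewrite plus_IZR, minus_IZR, mult_IZR, <- INR_IZR_INZ, <- Hz. ring. }
        split; apply le_IZR; lra. }
      assert (k n = -1 \/ k n = 0 \/ k n = 1)%Z as [-> | [-> | ->]] by lia; cbn; auto.
  - apply (act_trunc_iff A B v hpos hB mu nu hmu hnu). exists (- z)%Z. unfold k. lia.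
Qed.

End Equivalence.

Theorem proposition6p3 (N : nat) (A : nat -> nat -> nat) (B : nat -> nat -> Z)
  (hKP : katsura_pair N A B)
  (hB01 : forall i j, i < N -> j < N -> B i j = 0%Z \/ B i j = 1%Z)
  (hreg : regular N A B)
  (v : nat -> nat) (hv : in_EC N A v)
  (hBv : forall n, B (v (S n)) (v n) = 1%Z)
  (mu nu : nat -> edge) (hmu : in_X N A v mu) (hnu : in_X N A v nu) :
  ae_equiv A B mu nu <->
  eq_mod1 (C_v_real A v (iota_v mu)) (C_v_real A v (iota_v nu)).
Proof.
  (* Only the entries of [B] along [v] matter, so [hKP] and [hB01] are not needed. *)
  assert (hpos : forall j, 0 < A (v (S j)) (v j)) by (intros j; apply hv).
  assert (hvN : forall j, v j < N) by (intros j; apply hv).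
  apply in_X_over in hmu, hnu.
  split; [|exact (ae_equiv_of_eq_mod1 N A B v hpos hBv mu nu hmu hnu hvN)].
  intros Hae.
  destruct (tail_one_or_Aprod_unbounded A v hpos) as [[T HT] | Hunb].
  - rewrite (over_all_one_unique A v mu nu hmu hnu
               (regular_tail_one_all_one N A B v hreg hvN hpos hBv T HT)).
    exists 0%Z. apply Rminus_diag.
  - destruct (ae_equiv_scaled_gap A B v hpos hBv mu nu hmu hnu Hae) as [K HK].
    exact (eq_IZR_of_scaled_gap _ K _ Hunb HK).
Qed.
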